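(* Let $G=(V,E)$ be a directed graph, $T=\{t_1,\dots,t_{n_T}\}$ a finite task set, $W^j=\{w^j_{uv}\in[0,1]:(u,v)\in E\}$ for each $t_j$, $\mathcal{L}:V\to\{a_1,\dots,a_{n_A}\}$ a location map, and $q_j^k\ge0$ qualities with $Q_j:=\sum_{v\in V}q_j^{\mathcal{L}(v)}>0$ for every $j$. Let $V_R\subseteq V$ with task sets $T_i\subseteq T$ for $v_i\in V_R$, and let $S\subseteq V_R$. Let $R(X)$ be a random MT-RR set as defined in the context. Then $$f(S)=\sum_{t_j\in T}Q_j\cdot\mathbb{E}_{R(X)}\big[\mathbb{I}_j(S^j\cap R(X))\big],$$ where $\mathbb{I}_j(S^j\cap R(X))=1$ if $X=j$ and $S^j\cap R(X)\neq\emptyset$, and $0$ otherwise.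
   Context: A realization $g$ of $W^j$ is a random spanning subgraph of $G$ in which each edge $(u,v)$ is included independently with probability $w^j_{uv}$, with probability $\Pr[g;W^j]$. $I_g(A)$ denotes the set of nodes reachable from a node of $A$ by a directed path in $g$ (including $A$). $S^j=\{v_i\in S:t_j\in T_i\}$, and $f(S)=\frac{1}{n_T}\sum_{t_j\in T}\sum_g\Pr[g;W^j]\sum_{v\in I_g(S^j)}q_j^{\mathcal{L}(v)}$. A random RR set $R^j$ for task $t_j$ is generated by: choosing a node $u\in V$ with probability $q_j^{\mathcal{L}(u)}/Q_j$; independently sampling a realization $g$ of $W^j$; and letting $R^j$ be the set of nodes that can reach $u$ by a directed path in $g$ (including $u$). A random MT-RR set $R(X)$ is generated by choosing $X$ uniformly at random from $\{1,\dots,n_T\}$ and then generating a random RR set for task $t_X$. *)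

From mathcomp Require Import all_boot all_order all_algebra.
Set Implicit Arguments. Unset Strict Implicit. Unset Printing Implicit Defensive.
Import Order.TTheory GRing.Theory Num.Theory.
Local Open Scope ring_scope.

(* A realization g is a set of edges (g \subset E); directed reachability in g. *)
Definition reach (V : finType) (g : {set V * V}) : rel V :=
  connect (fun u v => (u, v) \in g).

Definition prg (R : ringType) (V : finType) (E g : {set V * V}) (w : V -> V -> R) : R :=
  \prod_(e in E) (if e \in g then w e.1 e.2 else 1 - w e.1 e.2).

Definition Ig (V : finType) (g : {set V * V}) (A : {set V}) : {set V} :=
  [set v | [exists a in A, reach g a v]].

Definition Sj (V : finType) (nT : nat) (Ti : V -> {set 'I_nT}) (S : {set V}) (j : 'I_nT)
  : {set V} := [set v in S | j \in Ti v].

Definition Qj (R : ringType) (V : finType) (nT nA : nat)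
  (q : 'I_nT -> 'I_nA -> R) (L : V -> 'I_nA) (j : 'I_nT) : R :=
  \sum_(v : V) q j (L v).

Definition fS (R : fieldType) (V : finType) (nT nA : nat) (E : {set V * V})
  (W : 'I_nT -> V -> V -> R) (L : V -> 'I_nA) (q : 'I_nT -> 'I_nA -> R)
  (Ti : V -> {set 'I_nT}) (S : {set V}) : R :=
  (nT%:R)^-1 * \sum_(j : 'I_nT) \sum_(g : {set V * V} | g \subset E)
     prg E g (W j) * \sum_(v in Ig g (Sj Ti S j)) q j (L v).

Definition RRset (V : finType) (g : {set V * V}) (u : V) : {set V} :=
  [set w | reach g w u].

(* Probability of outcome (X = x, root u, realization g) of the random MT-RR process:
   X uniform on tasks, u chosen w.p. q_x^{L u}/Q_x, g sampled from W^x. *)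
Definition mtrr_mass (R : fieldType) (V : finType) (nT nA : nat) (E : {set V * V})
  (W : 'I_nT -> V -> V -> R) (L : V -> 'I_nA) (q : 'I_nT -> 'I_nA -> R)
  (x : 'I_nT) (u : V) (g : {set V * V}) : R :=
  (nT%:R)^-1 * (q x (L u) / Qj q L x) * prg E g (W x).

Definition exp_Ij (R : fieldType) (V : finType) (nT nA : nat) (E : {set V * V})
  (W : 'I_nT -> V -> V -> R) (L : V -> 'I_nA) (q : 'I_nT -> 'I_nA -> R)
  (Ti : V -> {set 'I_nT}) (S : {set V}) (j : 'I_nT) : R :=
  \sum_(x : 'I_nT) \sum_(u : V) \sum_(g : {set V * V} | g \subset E)
    mtrr_mass E W L q x u g *
    (if (x == j) && (Sj Ti S j :&: RRset g u != set0) then 1 else 0).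

From mathcomp Require Import all_boot all_order all_algebra.
Import Order.TTheory GRing.Theory Num.Theory.
Local Open Scope ring_scope.

(* Linearity of expectation: in E[I_j(S^j ∩ R(X))] only the outcomes with
   X = j contribute, the factor Q_j cancels the normalisation of the root
   distribution, and a root u is hit exactly when u ∈ I_g(S^j), i.e. when S^j
   meets the RR set of u in g. *)

Lemma mem_Ig (V : finType) (g : {set V * V}) (A : {set V}) (u : V) :
  (u \in Ig g A) = (A :&: RRset g u != set0).
Proof.
rewrite inE; apply/existsP/set0Pn.
  by case=> a /andP [aA r]; exists a; rewrite !inE aA r.
by case=> a; rewrite !inE => /andP [aA r]; exists a; rewrite aA r.
Qed.

Section MTRR.

Variables (R : fieldType) (V : finType) (nT nA : nat) (E : {set V * V}).
Variables (W : 'I_nT -> V -> V -> R) (L : V -> 'I_nA) (q : 'I_nT -> 'I_nA -> R).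

Lemma exp_Ij_Ig (Ti : V -> {set 'I_nT}) (S : {set V}) (j : 'I_nT) :
  exp_Ij E W L q Ti S j =
  \sum_(g : {set V * V} | g \subset E) \sum_(u in Ig g (Sj Ti S j))
    mtrr_mass E W L q j u g.
Proof.
rewrite /exp_Ij (bigD1 j) //= [X in _ + X]big1 ?addr0; last first.
  move=> x /negPf xj; apply: big1 => u _; apply: big1 => g _.
  by rewrite xj mulr0.
rewrite exchange_big /=; apply: eq_bigr => g _.
rewrite [RHS]big_mkcond /=; apply: eq_bigr => u _.
by rewrite mem_Ig eqxx /=; case: ifP; rewrite ?mulr1 ?mulr0.
Qed.

Lemma Qj_mtrr_mass (x : 'I_nT) (u : V) (g : {set V * V}) :
  Qj q L x != 0 ->
  Qj q L x * mtrr_mass E W L q x u g = nT%:R^-1 * (prg E g (W x) * q x (L u)).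
Proof.
move=> Q0; rewrite /mtrr_mass mulrCA -!mulrA mulrCA mulKf //.
by rewrite mulrCA (mulrC (q _ _)).
Qed.

End MTRR.

Theorem theorem3 (R : realFieldType) (V : finType) (E : {set V * V}) (nT nA : nat)
  (W : 'I_nT -> V -> V -> R) (L : V -> 'I_nA) (q : 'I_nT -> 'I_nA -> R)
  (VR : {set V}) (Ti : V -> {set 'I_nT}) (S : {set V})
  (hW : forall j u v, (u, v) \in E -> 0 <= W j u v <= 1)
  (hq : forall j k, 0 <= q j k)
  (hQ : forall j, 0 < Qj q L j)
  (hTi : forall v, v \in VR -> Ti v \subset [set: 'I_nT])
  (hS : S \subset VR) :
  fS E W L q Ti S = \sum_(j : 'I_nT) Qj q L j * exp_Ij E W L q Ti S j.
Proof.
rewrite /fS mulr_sumr; apply: eq_bigr => j _.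
have Q0 : Qj q L j != 0 by rewrite gt_eqF.
rewrite exp_Ij_Ig !mulr_sumr; apply: eq_bigr => g _.
rewrite !mulr_sumr; apply: eq_bigr => u _.
by rewrite Qj_mtrr_mass.
Qed.
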